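(* Let $\sigma>0$, $\bar\gamma>0$, $c_\infty\ge0$, and let $\kappa:[0,\infty)\to\mathbb{R}$ be $L_\kappa$-Lipschitz with $\kappa(0)=0$; set $\tau_\gamma(w)=w+\gamma\kappa(w)$. Let $(\gamma_n)\subset(0,\bar\gamma]$ with $\gamma_n\to0$, $w_0\ge0$, let $(W^{(n)}_k)_k$ be the Markov chain with $W^{(n)}_0=w_0$ and kernel $Q_{\gamma_n}$, where $$Q_\gamma(w,A)=\delta_0(A)\int_{\mathbb{R}}\bar p_{\sigma^2\gamma}(\tau_\gamma(w)+\gamma c_\infty,g)\varphi(g)dg+\int_{\mathbb{R}}\mathbb{1}_A(\tau_\gamma(w)+\gamma c_\infty-2\sigma\gamma^{1/2}g)\{1-\bar p_{\sigma^2\gamma}(\tau_\gamma(w)+\gamma c_\infty,g)\}\varphi(g)dg,$$ $\bar p_{\sigma^2\gamma}(a,g)=1\wedge\varphi_{\sigma^2\gamma}(a-\sigma\sqrt\gamma g)/\varphi_{\sigma^2\gamma}(\sigma\sqrt\gamma g)$, and let $\mu_n$ be the law on $\mathbb W=C([0,\infty),\mathbb{R})$ (uniform topology on compacts) of the linear interpolation $\mathbf W^{(n)}_t=W^{(n)}_{\lfloor t/\gamma_n\rfloor}+\{W^{(n)}_{\lceil t/\gamma_n\rceil}-W^{(n)}_{\lfloor t/\gamma_n\rfloor}\}\{t/\gamma_n-\lfloor t/\gamma_n\rfloor\}$. Let $\mu_\infty$ be a limit point (for convergence in distribution) of $(\mu_n)_{n\in\mathbb{N}}$. Then $\mu_\infty$-almost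 everywhere, $\inf_{t\in[0,\infty)}\mathrm W_t\ge0$, where $(\mathrm W_t)$ is the canonical process on $\mathbb W$.
   Context: $\varphi$ is the standard normal density and $\varphi_s(t)=(2\pi s)^{-1/2}e^{-t^2/(2s)}$. *)

From HB Require Import structures.
From mathcomp Require Import all_boot all_order all_algebra.
From mathcomp Require Import all_classical all_reals all_analysis.
Set Implicit Arguments. Unset Strict Implicit. Unset Printing Implicit Defensive.
Import Order.TTheory GRing.Theory Num.Theory.
Import numFieldNormedType.Exports.
Local Open Scope classical_set_scope.
Local Open Scope ring_scope.

Section Defs.
Variable R : realType.

Definition phis (s t : R) : R :=
  (Num.sqrt (2 * pi * s))^-1 * expR (- (t ^+ 2) / (2 * s)).

Definition phi (t : R) : R := phis 1 t.

Definition tau (kappa : R -> R) (gamma w : R) : R := w + gamma * kappa w.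

Definition pbar (sigma gamma a g : R) : R :=
  Num.min 1 (phis (sigma ^+ 2 * gamma) (a - sigma * Num.sqrt gamma * g)
             / phis (sigma ^+ 2 * gamma) (sigma * Num.sqrt gamma * g)).

Definition Qker (sigma cinf : R) (kappa : R -> R) (gamma w : R) (A : set R)
    : \bar R :=
  let a := tau kappa gamma w + gamma * cinf in
  ((\1_A (0 : R))%:E *
     \int[lebesgue_measure]_(g in [set: R]) (pbar sigma gamma a g * phi g)%:E
   + \int[lebesgue_measure]_(g in [set: R])
       (\1_A (a - 2 * sigma * Num.sqrt gamma * g)
        * (1 - pbar sigma gamma a g) * phi g)%:E)%E.

(* (W k)_k is, under P, a Markov chain started at w0 with kernel Q, stated via
   its finite-dimensional distributions. *)
Definition markov_chain_from {d} {Omega : measurableType d}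
    (P : probability Omega R) (Q : R -> set R -> \bar R) (w0 : R)
    (W : nat -> Omega -> R) : Prop :=
  (forall k, measurable_fun [set: Omega] (W k)) /\
  (forall A : set R, measurable A -> P (W 0%N @^-1` A) = (\1_A w0)%:E) /\
  (forall (k : nat) (A : nat -> set R), (forall i, measurable (A i)) ->
     P (\bigcap_(i < k.+2) (W i @^-1` A i)) =
     (\int[P]_(x in \bigcap_(i < k.+1) (W i @^-1` A i)) Q (W k x) (A k.+1))%E).

Definition interp (gamma : R) (u : nat -> R) (t : R) : R :=
  let fl := `|Num.floor (t / gamma)|%N in
  let ce := `|Num.ceil (t / gamma)|%N in
  u fl + (u ce - u fl) * (t / gamma - (Num.floor (t / gamma))%:~R).

(* f is an element of W = C([0, oo), R) (values at t < 0 are irrelevant) *)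
Definition cpath (f : R -> R) : Prop := {within `[0, +oo[, continuous f}.

(* F is a bounded continuous functional on C([0,oo),R) equipped with the
   topology of uniform convergence on compacts of [0,oo). *)
Definition bounded_cont_functional (F : (R -> R) -> R) : Prop :=
  (exists M : R, forall f, cpath f -> `|F f| <= M) /\
  (forall f, cpath f -> forall eps : R, 0 < eps ->
     exists T : R, exists delta : R, 0 < T /\ 0 < delta /\
       forall g, cpath g ->
         (forall t, 0 <= t <= T -> `|f t - g t| < delta) ->
         `|F f - F g| < eps).

End Defs.

From HB Require Import structures.
From mathcomp Require Import all_boot all_order all_algebra.
From mathcomp Require Import all_classical all_reals all_analysis.
From mathcomp Require Import measurable_realfun ring lra.
Set Implicit Arguments. Unset Strict Implicit. Unset Printing Implicit Defensive.
Import Order.TTheory GRing.Theory Num.Theory.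
Import numFieldNormedType.Exports.
Local Open Scope classical_set_scope.
Local Open Scope ring_scope.

(* From a state w >= 0 the drifted point a = tau_gamma(w) + gamma c_inf is
   nonnegative once gamma L_kappa <= 1, and a proposal a - 2x below 0 then has
   (a - x)^2 <= x^2, so the Metropolis ratio is >= 1 and the chain jumps to 0
   instead.  Hence every W^(n)_k, and every interpolated path, is a.s.
   nonnegative.  For t >= 0 the functional f |-> 1 /\ max(0, -f(t)) is bounded
   and continuous, so its mu_infty-expectation is the limit of the
   mu_n-expectations, which vanish: W_t >= 0 mu_infty-a.s. for each t, hence
   simultaneously for the countably many t = n/(m+1), hence for all t >= 0 by
   continuity of the paths. *)

Section neg_clip.
Context {R : realDomainType}.

Definition neg_clip (y : R) : R := Num.min 1 (Num.max 0 (- y)).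

Lemma neg_clip_cases y :
  [\/ 0 <= y /\ neg_clip y = 0, (-1 <= y /\ y < 0) /\ neg_clip y = - y
    | y < -1 /\ neg_clip y = 1].
Proof.
rewrite /neg_clip; have [y_ge0|y_lt0] := leP 0 y.
  apply: Or31; split => //.
  by rewrite (max_idPl _) ?oppr_le0 // (min_idPr _) ?ler01.
have -> : Num.max 0 (- y) = - y by apply/max_idPr; rewrite oppr_ge0 ltW.
have [y_ge1|y_lt1] := leP (-1) y.
  by apply: Or32; split => //; apply/min_idPr; rewrite lerNl.
by apply: Or33; split => //; apply/min_idPl; rewrite lerNr ltW.
Qed.

Lemma neg_clip_ge0 y : 0 <= neg_clip y.
Proof. by case: (neg_clip_cases y) => -[? ->] //; lra. Qed.

Lemma neg_clip_le1 y : neg_clip y <= 1.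
Proof. by case: (neg_clip_cases y) => -[? ->] //; lra. Qed.

Lemma neg_clip_eq0 y : neg_clip y = 0 <-> 0 <= y.
Proof. by split; case: (neg_clip_cases y) => -[? ->] //; lra. Qed.

Lemma neg_clip_lipschitz a b : `|neg_clip a - neg_clip b| <= `|a - b|.
Proof.
have := ler_norm (a - b); have := ler_norm (b - a); rewrite distrC => ab ba.
rewrite ler_norml; apply/andP; split;
  case: (neg_clip_cases a) => -[? ->]; case: (neg_clip_cases b) => -[? ->]; lra.
Qed.

End neg_clip.

Lemma measurable_neg_clip d (T : measurableType d) (R : realType) (f : T -> R) :
  measurable_fun [set: T] f -> measurable_fun [set: T] (neg_clip \o f).
Proof.
move=> mf; apply: measurable_minr; first exact: measurable_cst.
by apply: measurable_maxr; [exact: measurable_cst | exact: measurable_funN].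
Qed.

Lemma bounded_cont_neg_clip_eval (R : realType) (t : R) : 0 <= t ->
  bounded_cont_functional (fun f : R -> R => neg_clip (f t)).
Proof.
move=> t_ge0; split.
  by exists 1 => f _; rewrite ger0_norm ?neg_clip_ge0 ?neg_clip_le1.
move=> f _ e e_gt0; exists (t + 1), e; split; first lra; split => //.
move=> g _ fg; apply: le_lt_trans (neg_clip_lipschitz _ _) _.
by apply: fg; apply/andP; split => //; lra.
Qed.

Lemma integral_neg_clip_eq0 d (T : measurableType d) (R : realType)
    (mu : measure T R) (f : T -> R) : measurable_fun [set: T] f ->
  (\int[mu]_(x in [set: T]) (neg_clip (f x))%:E = 0)%E <->
  {ae mu, forall x, 0 <= f x}.
Proof.
move=> mf; have mg : measurable_fun [set: T] (fun x => (neg_clip (f x))%:E).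
  exact/measurable_EFinP/measurable_neg_clip.
have -> : (\int[mu]_(x in [set: T]) (neg_clip (f x))%:E =
           \int[mu]_(x in [set: T]) `|(neg_clip (f x))%:E|)%E.
  by apply: eq_integral => x _; rewrite gee0_abs // lee_fin neg_clip_ge0.
rewrite ae_eq_integral_abs //; split; apply: filterS => x.
  by move=> /(_ I) [] /neg_clip_eq0.
by move=> /neg_clip_eq0 -> _.
Qed.

Section kernel.
Variable R : realType.

Lemma phis_gt0 (s x : R) : 0 < s -> 0 < phis s x.
Proof.
move=> s_gt0; rewrite /phis mulr_gt0 ?expR_gt0 // invr_gt0 sqrtr_gt0.
by rewrite !mulr_gt0 ?pi_gt0.
Qed.

Lemma phis_le (s x y : R) : 0 < s -> x ^+ 2 <= y ^+ 2 -> phis s y <= phis s x.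
Proof.
move=> s_gt0 xy; rewrite /phis ler_wpM2l ?invr_ge0 ?sqrtr_ge0 // ler_expR.
by rewrite !mulNr lerN2 ler_wpM2r // invr_ge0 mulr_ge0 // ltW.
Qed.

Lemma pbar_eq1 (sigma gamma a g : R) : 0 < sigma -> 0 < gamma ->
  (a - sigma * Num.sqrt gamma * g) ^+ 2 <= (sigma * Num.sqrt gamma * g) ^+ 2 ->
  pbar sigma gamma a g = 1.
Proof.
move=> sigma_gt0 gamma_gt0 le_sq.
have s_gt0 : 0 < sigma ^+ 2 * gamma by rewrite mulr_gt0 ?exprn_gt0.
by apply/min_idPl; rewrite ler_pdivlMr ?phis_gt0 // mul1r phis_le.
Qed.

Lemma Qker_lt0 (sigma cinf gamma w : R) (kappa : R -> R) :
  0 < sigma -> 0 < gamma -> 0 <= tau kappa gamma w + gamma * cinf ->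
  Qker sigma cinf kappa gamma w [set x | x < 0] = 0%E.
Proof.
move=> sigma_gt0 gamma_gt0; rewrite /Qker /=.
set a := tau kappa gamma w + gamma * cinf => a_ge0.
rewrite indicE memNset /= ?ltxx // mul0e add0e; apply: integral0_eq => g _.
set x := sigma * Num.sqrt gamma * g.
have -> : 2 * sigma * Num.sqrt gamma * g = 2 * x by rewrite /x; ring.
have [ax_ge0|ax_lt0] := leP 0 (a - 2 * x).
  by rewrite indicE memNset ?mul0r //= ltNge ax_ge0.
rewrite pbar_eq1 ?subrr ?mulr0 ?mul0r //.
have : 0 <= a * (2 * x - a) by apply: mulr_ge0 => //; lra.
by rewrite -/x !expr2; nra.
Qed.

Lemma tau_ge0 (kappa : R -> R) (Lk gamma w : R) :
  (forall x y, 0 <= x -> 0 <= y -> `|kappa x - kappa y| <= Lk * `|x - y|) ->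
  kappa 0 = 0 -> 0 <= gamma -> gamma * Lk <= 1 -> 0 <= w ->
  0 <= tau kappa gamma w.
Proof.
move=> kappa_lip kappa0 gamma_ge0 gammaLk w_ge0.
have := kappa_lip w 0 w_ge0 (lexx 0).
rewrite kappa0 !subr0 (ger0_norm w_ge0) => kappa_le.
have : - kappa w <= Lk * w by rewrite (le_trans _ kappa_le) // -normrN ler_norm.
rewrite /tau; nra.
Qed.
End kernel.

Lemma measurable_lt0 (R : realType) : measurable [set x : R | x < 0].
Proof.
rewrite (_ : [set x | x < 0] = `]-oo, 0[%classic); first exact: measurable_itv.
by apply/seteqP; split => x /=; rewrite in_itv.
Qed.

Lemma measurable_ge0 (R : realType) : measurable [set x : R | 0 <= x].
Proof.
rewrite (_ : [set x | 0 <= x] = ~` [set x | x < 0]).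
  by apply: measurableC; exact: measurable_lt0.
by apply/seteqP; split => x /=; rewrite leNgt => /negP.
Qed.

Section markov_chain_ge0.
Context d (T : measurableType d) (R : realType) (P : probability T R).
Variables (Q : R -> set R -> \bar R) (w0 : R) (W : nat -> T -> R).
Hypothesis W_chain : markov_chain_from P Q w0 W.
Hypothesis Q_lt0 : forall w, 0 <= w -> Q w [set x | x < 0] = 0%E.
Hypothesis w0_ge0 : 0 <= w0.

Let measurable_preimage k A : measurable A -> measurable (W k @^-1` A).
Proof.
by move=> mA; have := W_chain.1 k measurableT A mA; rewrite setTI.
Qed.

Lemma negligible_first_lt0 k :
  P.-negligible [set x | (forall i, (i <= k)%N -> 0 <= W i x) /\ W k.+1 x < 0].
Proof.
pose A i := if (i <= k)%N then [set y : R | 0 <= y] else [set y | y < 0].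
have mA i : measurable (A i).
  by rewrite /A; case: ifP => _; [exact: measurable_ge0 | exact: measurable_lt0].
apply: (negligibleS (A := \bigcap_(i < k.+2) W i @^-1` A i)).
  move=> x /= [W_ge0 W_lt0] i /= ik; rewrite /A; case: ifPn => [/W_ge0 //|].
  rewrite -ltnNge => ki; suff -> : i = k.+1 by [].
  by apply/eqP; rewrite eqn_leq -ltnS ik ki.
apply/negligibleP.
  by apply: bigcap_measurableType => i _; exact: measurable_preimage.
transitivity (\int[P]_(x in \bigcap_(i < k.+1) W i @^-1` A i) Q (W k x) (A k.+1))%E.
  exact: W_chain.2.2.
rewrite {2}/A ltnn; apply: integral0_eq => x Wx.
by apply: Q_lt0; have := Wx k (ltnSn k); rewrite /A leqnn.
Qed.

Lemma negligible_some_lt0 k :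
  P.-negligible [set x | exists2 i, (i <= k)%N & W i x < 0].
Proof.
elim: k => [|k IHk].
  apply: (negligibleS (A := W 0%N @^-1` [set y | y < 0])).
    by move=> x [i]; rewrite leqn0 => /eqP ->.
  apply/negligibleP; first by apply: measurable_preimage; exact: measurable_lt0.
  apply: eq_trans (W_chain.2.1 _ (@measurable_lt0 R)) _.
  by rewrite indicE memNset //= ltNge w0_ge0.
apply: negligibleS (negligibleU IHk (negligible_first_lt0 k)).
move=> x [i ik Wi_lt0] /=.
have [[j jk Wj_lt0]|none_lt0] := pselect (exists2 j, (j <= k)%N & W j x < 0).
  by left; exists j.
right; split.
  by move=> j jk; rewrite leNgt; apply/negP => Wj_lt0; apply: none_lt0; exists j.
move: ik; rewrite leq_eqVlt => /orP[/eqP <- //|ik].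
by exfalso; apply: none_lt0; exists i.
Qed.

Lemma markov_chain_ae_ge0 : {ae P, forall x k, 0 <= W k x}.
Proof.
apply: ae_foralln => k; apply: negligibleS (negligible_some_lt0 k) => x /=.
by rewrite leNgt => /negP; rewrite negbK => Wk_lt0; exists k.
Qed.

End markov_chain_ge0.

Section interp.
Variable R : realType.

Lemma interp_ge0 (gamma t : R) (u : nat -> R) :
  (forall k, 0 <= u k) -> 0 <= interp gamma u t.
Proof.
move=> u_ge0; rewrite /interp /=.
set fl := `|Num.floor (t / gamma)|%N.
set th := t / gamma - (Num.floor (t / gamma))%:~R.
have th_ge0 : 0 <= th by rewrite subr_ge0 floor_le.
have th_le1 : th <= 1.
  by have := lt_succ_floor (t / gamma); rewrite intrD rmorph1 /th; lra.
have := mulr_ge0 (u_ge0 fl) (_ : 0 <= 1 - th).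
have := mulr_ge0 (u_ge0 `|Num.ceil (t / gamma)|%N) th_ge0; nra.
Qed.

Lemma measurable_interp d (T : measurableType d) (W : nat -> T -> R) gamma t :
  (forall k, measurable_fun [set: T] (W k)) ->
  measurable_fun [set: T] (fun x => interp gamma (W^~ x) t).
Proof.
move=> mW; apply: measurable_funD; first exact: mW.
by apply: measurable_funM; [exact: measurable_funB | exact: measurable_cst].
Qed.

End interp.

Lemma nat_ratio_in_itv (R : archiFieldType) (t e : R) : 0 <= t -> 0 < e ->
  exists m n : nat, t < n%:R / m.+1%:R < t + e.
Proof.
move=> t_ge0 e_gt0; set m := Num.truncn e^-1; set M : R := m.+1%:R.
have M_gt0 : 0 < M by rewrite ltr0n.
have eM_gt1 : 1 < e * M.
  by rewrite -(mulfV (lt0r_neq0 e_gt0)) ltr_pM2l // truncnS_gt.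
set n := (Num.truncn (t * M)).+1.
have tM_lt : t * M < n%:R by rewrite truncnS_gt.
have n_le : n%:R <= t * M + 1.
  by rewrite /n -addn1 natrD lerD2r truncn_le mulr_ge0 // ltW.
exists m, n; rewrite -/M ltr_pdivlMr // ltr_pdivrMr // tM_lt /=; nra.
Qed.

Lemma cpath_ge0 (R : realType) (f : R -> R) : cpath f ->
  (forall m n : nat, 0 <= f (n%:R / m.+1%:R)) -> forall t, 0 <= t -> 0 <= f t.
Proof.
move=> f_cont f_ratio_ge0 t t_ge0; rewrite leNgt; apply/negP => ft_lt0.
have t_in : `[0, +oo[%classic t by rewrite /= in_itv /= t_ge0.
have : \forall s \near within `[0, +oo[%classic (nbhs t), f s < 0.
  exact: cvgr_lt _ ((subspace_continuousP _ _).1 f_cont t t_in) _ ft_lt0.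
rewrite /within /= => /nbhs_ballP[e /= e_gt0 f_lt0].
have [m [n /andP[t_lt lt_te]]] := nat_ratio_in_itv t_ge0 e_gt0.
move: t_lt lt_te (f_ratio_ge0 m n); set s := n%:R / m.+1%:R => t_lt lt_te fs_ge0.
have s_in : s \in `[0, +oo[ by rewrite in_itv /= andbT; lra.
have ts_e : ball t e s by rewrite /ball /= ltr_distlC; apply/andP; split; lra.
by have := f_lt0 _ ts_e s_in; rewrite ltNge fs_ge0.
Qed.

Lemma near_homo_ltn (f : nat -> nat) (P : nat -> Prop) :
  {homo f : m n / (m < n)%N} ->
  (\forall n \near \oo, P n) -> \forall n \near \oo, P (f n).
Proof.
move=> f_incr [N _ PN]; exists N => // n /= Nn; apply: PN.
apply: leq_trans Nn _; elim: n => // n IHn.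
exact: leq_ltn_trans IHn (f_incr _ _ (ltnSn n)).
Qed.

Lemma Qker_chain_ae_ge0 d (T : measurableType d) (R : realType)
    (P : probability T R) (sigma cinf Lk gamma w0 : R) (kappa : R -> R)
    (W : nat -> T -> R) :
  0 < sigma -> 0 <= cinf -> 0 < gamma -> gamma * Lk <= 1 ->
  (forall x y, 0 <= x -> 0 <= y -> `|kappa x - kappa y| <= Lk * `|x - y|) ->
  kappa 0 = 0 -> 0 <= w0 ->
  markov_chain_from P (Qker sigma cinf kappa gamma) w0 W ->
  {ae P, forall x k, 0 <= W k x}.
Proof.
move=> sigma_gt0 cinf_ge0 gamma_gt0 gammaLk kappa_lip kappa0 w0_ge0 W_chain.
apply: markov_chain_ae_ge0 W_chain _ w0_ge0 => w w_ge0.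
apply: Qker_lt0 => //; apply: addr_ge0; last exact: mulr_ge0 (ltW _) cinf_ge0.
exact: tau_ge0 kappa_lip kappa0 (ltW gamma_gt0) gammaLk w_ge0.
Qed.

Theorem proposition43 (R : realType)
  (sigma gbar cinf Lk : R) (kappa : R -> R)
  (hsigma : 0 < sigma) (hgbar : 0 < gbar) (hcinf : 0 <= cinf)
  (hLip : forall x y : R, 0 <= x -> 0 <= y -> `|kappa x - kappa y| <= Lk * `|x - y|)
  (hk0 : kappa 0 = 0)
  (gam : nat -> R) (hgam : forall n, 0 < gam n <= gbar)
  (hgam0 : gam @ \oo --> (0 : R))
  (w0 : R) (hw0 : 0 <= w0)
  (dn : nat -> measure_display) (Omn : forall n, measurableType (dn n))
  (Pn : forall n, probability (Omn n) R)
  (Wn : forall n, nat -> Omn n -> R)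
  (hchain : forall n, markov_chain_from (Pn n) (Qker sigma cinf kappa (gam n)) w0 (Wn n))
  (d : measure_display) (Om : measurableType d) (P : probability Om R)
  (X : Om -> R -> R)
  (hXmeas : forall t, measurable_fun [set: Om] (fun om => X om t))
  (hXcont : forall om, cpath (X om))
  (hlim : exists phi_ : nat -> nat, {homo phi_ : m n / (m < n)%N >-> (m < n)%N} /\
     forall F : (R -> R) -> R, bounded_cont_functional F ->
       ((fun n => \int[Pn (phi_ n)]_(x in [set: Omn (phi_ n)])
                   (F (interp (gam (phi_ n)) (fun k => Wn (phi_ n) k x)))%:E)
       @ \oo --> \int[P]_(x in [set: Om]) (F (X x))%:E)%E) :
  {ae P, forall om, forall t : R, 0 <= t -> 0 <= X om t}.
Proof.
have [phi_ [phi_incr F_cvg]] := hlim.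
have gamLk : \forall n \near \oo, gam (phi_ n) * Lk <= 1.
  apply: (near_homo_ltn (P := fun n => gam n * Lk <= 1) phi_incr).
  have : gam n * Lk @[n --> \oo] --> 0 by rewrite -(mul0r Lk); exact: cvgMl hgam0.
  by move=> /cvgr_lt /(_ _ ltr01); apply: filterS => n /ltW.
have Xt_ge0 t : 0 <= t -> {ae P, forall om, 0 <= X om t}.
  move=> t_ge0; apply/integral_neg_clip_eq0; first exact: hXmeas.
  apply: cvg_unique (F_cvg _ (bounded_cont_neg_clip_eval t_ge0)) _;
    first exact: ereal_hausdorff.
  apply: cvg_near_cst; apply: filterS gamLk => n gamLk_n.
  have /andP[gam_gt0 _] := hgam (phi_ n).
  apply/integral_neg_clip_eq0; first exact: measurable_interp (hchain _).1.
  apply: filterS (Qker_chain_ae_ge0 hsigma hcinf gam_gt0 gamLk_n hLip hk0 hw0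
                    (hchain (phi_ n))) => x W_ge0.
  exact: interp_ge0.
have := ae_foralln (fun m => ae_foralln (fun n =>
  Xt_ge0 _ (divr_ge0 (ler0n R n) (ler0n R m.+1)))).
by apply: filterS => om X_ge0; apply: cpath_ge0.
Qed.
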